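(* Let $l$, $m$, $n$ be positive integers such that $1<l<m\le n$. Then \[ \sum_{d=1}^n \mu(d)\, 2^{\lfloor\frac{n}{d} \rfloor - \lfloor \frac{n-1}{d} \rfloor + \lfloor\frac{m}{d} \rfloor - \lfloor \frac{m-1}{d} \rfloor + \lfloor\frac{l}{d} \rfloor - \lfloor \frac{l-1}{d} \rfloor} \] equals \[ \begin{cases} 4+ M(n) & \text{if } \gcd(l,m)=\gcd(l,n)=\gcd(m,n) =1, \\ 3+ M(n) & \text{if exactly two of the pairs } \{l,m\},\{l,n\},\{m,n\} \text{ are co-prime},\\ 2+ M(n) & \text{if exactly one of these pairs is co-prime},\\ 1 + M(n) & \text{if none of these pairs is co-prime and } \gcd(l,m,n)=1, \\ M(n) & \text{otherwise.} \end{cases} \]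
   Context: $\mu$ is the Möbius function and $M(n)=\sum_{d=1}^n\mu(d)$ is the Mertens function. $\lfloor x\rfloor$ is the floor of $x$. *)

From mathcomp Require Import all_boot all_order all_algebra.
Set Implicit Arguments. Unset Strict Implicit. Unset Printing Implicit Defensive.
Import Order.TTheory GRing.Theory Num.Theory.
Local Open Scope ring_scope.

Definition mobius (d : nat) : int :=
  if (d == 0)%N then 0
  else if has (fun p => (p * p %| d)%N) (primes d) then 0
  else (-1) ^+ size (primes d).

Definition mertens (n : nat) : int := \sum_(1 <= d < n.+1) mobius d.

From mathcomp Require Import all_boot all_order all_algebra zify ring.
Import Order.TTheory GRing.Theory Num.Theory.
Local Open Scope ring_scope.

(* Since [2 ^ [d | a] = 1 + [d | a]], the summand expands as
   [mu d * (1 + [d | n]) (1 + [d | m]) (1 + [d | l])], i.e. as [mu d] plus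
   the terms [mu d * [d | g]] for the seven gcds [g] of nonempty subsets of
   [{l, m, n}].  Summing over [d], the first part gives [M n] and each of the
   others gives [[g = 1]] by the Möbius divisor-sum identity, which is proved
   by pairing [d] with [p d] for the least prime factor [p] of [g]. *)

Lemma mobius_sq_dvd p d : prime p -> (p * p %| d)%N -> mobius d = 0.
Proof.
move=> p_pr ppd; rewrite /mobius; case: eqP => // /eqP d_neq0.
suff -> : has (fun q => (q * q %| d)%N) (primes d) by [].
apply/hasP; exists p => //; rewrite mem_primes p_pr lt0n d_neq0.
exact: dvdn_trans (dvdn_mulr _ _) ppd.
Qed.

Lemma mobiusMp p d : prime p -> ~~ (p %| d)%N -> (0 < d)%N ->
  mobius (p * d) = - mobius d.
Proof.
move=> p_pr npd d_gt0; have p_gt0 := prime_gt0 p_pr.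
have pd_neq0 : (p * d != 0)%N by rewrite muln_eq0 negb_or -!lt0n p_gt0.
have d_neq0 : (d != 0)%N by rewrite -lt0n.
have primesMp : primes (p * d) =i p :: primes d.
  by move=> q; rewrite primesM // (primes_prime p_pr) !in_cons in_nil orbF.
have p_notin : p \notin primes d by rewrite mem_primes p_pr d_gt0.
rewrite /mobius (negbTE pd_neq0) (negbTE d_neq0) (eq_has_r primesMp) /=.
rewrite dvdn_pmul2l // (negbTE npd) /=.
have -> : has (fun q => (q * q %| p * d)%N) (primes d)
        = has (fun q => (q * q %| d)%N) (primes d).
  apply: eq_in_has => q; rewrite mem_primes => /and3P[q_pr _ qd].
  have qq_p : coprime (q * q) p.
    rewrite coprimeMl andbb prime_coprime // dvdn_prime2 //.
    by apply: contraNneq npd => <-.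
  by rewrite Gauss_dvdr.
case: has => //.
rewrite (perm_size (uniq_perm (primes_uniq _) _ primesMp)) /=.
  by rewrite exprS mulN1r.
by rewrite p_notin primes_uniq.
Qed.

Lemma big_nat_dvdn_mul (R : nmodType) (F : nat -> R) p N : (0 < p)%N ->
  \sum_(0 <= d < p * N | (p %| d)%N) F d = \sum_(0 <= e < N) F (p * e).
Proof.
move=> p_gt0; elim: N => [|N IHN]; first by rewrite muln0 !big_geq.
rewrite (big_cat_nat _ (n := p * N)) ?leq_pmul2l //= IHN big_nat_recr //=.
congr (_ + _); rewrite mulnS addnC big_ltn_cond; last by rewrite -addn1 leq_add2l.
rewrite dvdn_mulr // big_nat_cond big_pred0 ?addr0 // => d.
apply/negbTE; rewrite -!andbA; apply/and3P => -[ltNd ltdN /dvdnP[k dE]].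
by move: ltNd ltdN; rewrite dE -mulnSr (mulnC k) !ltn_pmul2l //; lia.
Qed.

Lemma big_nat_dvdn_widen (R : nmodType) (F : nat -> R) g N :
  (0 < g)%N -> (g < N)%N ->
  \sum_(0 <= d < N | (d %| g)%N) F d = \sum_(0 <= d < g.+1 | (d %| g)%N) F d.
Proof.
move=> g_gt0 ltgN; rewrite [LHS](big_cat_nat _ (n := g.+1)) //=.
rewrite -[RHS]addr0; congr (_ + _); rewrite big_nat_cond big_pred0 // => d.
by apply/negbTE/andP => -[/andP[ltgd _] /(dvdn_leq g_gt0)]; rewrite leqNgt ltgd.
Qed.

Lemma mobiusMp_dvdn p g e : prime p -> (p %| g)%N ->
  (if (p * e %| g)%N then mobius (p * e) else 0)
  = - (if (e %| g)%N then if ~~ (p %| e)%N then mobius e else 0 else 0).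
Proof.
move=> p_pr pg; have [pe|npe] := boolP (p %| e)%N.
  by rewrite (@mobius_sq_dvd p) ?dvdn_pmul2l ?prime_gt0 // !if_same oppr0.
have e_gt0 : (0 < e)%N by case: e npe; rewrite ?dvdn0.
by rewrite mobiusMp // Gauss_dvd ?prime_coprime // pg /=; case: ifP; rewrite ?oppr0.
Qed.

Lemma sum_mobius_divisors g : (0 < g)%N ->
  \sum_(0 <= d < g.+1 | (d %| g)%N) mobius d = (g == 1)%N%:R.
Proof.
move=> g_gt0; have [->|g_neq1] := eqVneq g 1%N.
  by rewrite big_mkcond big_nat_recr // big_nat1.
have g_gt1 : (1 < g)%N by lia.
have p_pr := pdiv_prime g_gt1; set p := pdiv g in p_pr *.
have ltg_pg : (g < p * g.+1)%N by have := prime_gt1 p_pr; nia.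
rewrite -(@big_nat_dvdn_widen _ mobius _ _ g_gt0 ltg_pg) (bigID (fun d => p %| d)%N) /=.
rewrite (eq_bigl (fun d => (p %| d) && (d %| g))%N); last by move=> d; rewrite andbC.
rewrite big_mkcondr big_nat_dvdn_mul ?prime_gt0 //.
rewrite (eq_bigr _ (fun e _ => mobiusMp_dvdn _ _ e p_pr (pdiv_dvd g))) sumrN.
by rewrite big_mkcondr big_nat_dvdn_widen // [X in _ + X]big_mkcond addNr.
Qed.

Lemma sum_mobius_dvdn g N : (0 < g)%N -> (g <= N)%N ->
  \sum_(1 <= d < N.+1) mobius d *+ (d %| g)%N = (g == 1)%N%:R.
Proof.
move=> g_gt0 legN; rewrite -sum_mobius_divisors // -(@big_nat_dvdn_widen _ _ _ N.+1) //.
rewrite [RHS]big_ltn_cond // dvd0n gtn_eqF // [RHS]big_mkcond.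
by apply: eq_bigr => d _; rewrite mulrb.
Qed.

Lemma divn_pred_diff a d : (0 < a)%N -> (0 < d)%N ->
  (a %/ d - (a - 1) %/ d)%N = (d %| a)%N.
Proof. by case: a => // a _ d_gt0; rewrite subn1 /= divnS //; lia. Qed.

Lemma mobius_mul_exp2_dvdn l m n d : (0 < l)%N -> (0 < m)%N -> (0 < n)%N ->
  (0 < d)%N ->
  mobius d * 2 ^+ ((n %/ d - (n - 1) %/ d) + (m %/ d - (m - 1) %/ d)
                   + (l %/ d - (l - 1) %/ d))%N
  = mobius d + \sum_(g <- [:: n; m; l; gcdn l m; gcdn l n; gcdn m n;
                              gcdn (gcdn l m) n]) mobius d *+ (d %| g)%N.
Proof.
move=> l_gt0 m_gt0 n_gt0 d_gt0; rewrite !divn_pred_diff // !big_cons big_nil.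
by rewrite !dvdn_gcd; case: (d %| l)%N; case: (d %| m)%N; case: (d %| n)%N => /=; ring.
Qed.

Lemma coprime_gcdn3 l m n : coprime l m || coprime l n || coprime m n ->
  coprime (gcdn l m) n.
Proof.
rewrite /coprime => /orP[/orP[]|] /eqP g1.
- by rewrite g1 gcd1n.
- by rewrite gcdnAC g1 gcd1n.
- by rewrite -gcdnA g1 gcdn1.
Qed.

Theorem theorem4p2 (l m n : nat) (hl : (1 < l)%N) (hlm : (l < m)%N) (hmn : (m <= n)%N) :
  \sum_(1 <= d < n.+1)
      mobius d * 2 ^+ ((n %/ d - (n - 1) %/ d) + (m %/ d - (m - 1) %/ d)
                       + (l %/ d - (l - 1) %/ d))%N
  = (let c := (coprime l m + coprime l n + coprime m n)%N in
     if (c == 3)%N then 4 + mertens n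
     else if (c == 2)%N then 3 + mertens n
     else if (c == 1)%N then 2 + mertens n
     else if gcdn (gcdn l m) n == 1%N then 1 + mertens n
     else mertens n).
Proof.
have [m_gt1 n_gt1] : (1 < m)%N /\ (1 < n)%N by split; lia.
have [l_gt0 m_gt0 n_gt0] : [/\ 0 < l, 0 < m & 0 < n]%N by split; lia.
have gcdn_le a b : (0 < b)%N -> (b <= n)%N -> (gcdn a b <= n)%N.
  by move=> b_gt0; apply/leq_trans/dvdn_leq/dvdn_gcdr.
under eq_big_nat => d /andP[d_gt0 _] do rewrite mobius_mul_exp2_dvdn //.
rewrite big_split exchange_big /= !big_cons big_nil.
rewrite !sum_mobius_dvdn; try by rewrite ?gcdn_gt0 ?l_gt0 ?gcdn_le //; lia.
rewrite (gtn_eqF hl) (gtn_eqF m_gt1) (gtn_eqF n_gt1) -!/(coprime _ _) /mertens.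
move: (@coprime_gcdn3 l m n); case: (coprime l m); case: (coprime l n); case: (coprime m n);
  move=> /= coprime_all;
  first [rewrite coprime_all //= ; ring | case: (coprime (gcdn l m) n) => /=; ring].
Qed.
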